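(* Let $Y^{(1)},Y^{(0)}$ be nonnegative random variables (potential outcomes) and $Z$ a random covariate vector. Let $$D(z)=\frac{\mathrm{E}(Y^{(1)}\mid Z=z)}{\mathrm{E}(Y^{(0)}\mid Z=z)}\quad\text{and}\quad AD(c)=\frac{\mathrm{E}(Y^{(1)}\mid D(Z)\ge c)}{\mathrm{E}(Y^{(0)}\mid D(Z)\ge c)}.$$ If all involved expectations are finite and $0<D(Z)<\infty$ for almost every $Z$, then $AD(c)$ is monotone increasing in $c$, and $AD(c)\ge c$ for any $c$. *)

From HB Require Import structures.
From mathcomp Require Import all_boot all_order all_algebra.
From mathcomp Require Import all_classical all_reals all_analysis.
Set Implicit Arguments. Unset Strict Implicit. Unset Printing Implicit Defensive.
Import Order.TTheory GRing.Theory Num.Theory.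
Local Open Scope classical_set_scope.
Local Open Scope ring_scope.

(* m is a version of the regression function z |-> E(Y | Z = z):
   m is measurable, m(Z) is integrable and for every measurable B,
   E[Y ; Z in B] = E[m(Z) ; Z in B]. *)
Definition is_cond_exp_given {d d' : measure_display} {T : measurableType d}
  {V : measurableType d'} {R : realType} (P : probability T R)
  (Y : T -> R) (Z : T -> V) (m : V -> R) : Prop :=
  [/\ measurable_fun setT m,
      P.-integrable setT (EFin \o (m \o Z)) &
      forall B : set V, measurable B ->
        (\int[P]_(w in Z @^-1` B) (Y w)%:E =
         \int[P]_(w in Z @^-1` B) (m (Z w))%:E)%E].

Definition condE_event {d : measure_display} {T : measurableType d}
  {R : realType} (P : probability T R) (Y : T -> R) (A : set T) : R :=
  fine (\int[P]_(w in A) (Y w)%:E) / fine (P A).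

Definition Dratio {V : Type} {R : realType} (m1 m0 : V -> R) (z : V) : R :=
  m1 z / m0 z.

Definition ADratio {d d' : measure_display} {T : measurableType d}
  {V : measurableType d'} {R : realType} (P : probability T R)
  (Y1 Y0 : T -> R) (Z : T -> V) (m1 m0 : V -> R) (c : R) : R :=
  condE_event P Y1 [set w | c <= Dratio m1 m0 (Z w)] /
  condE_event P Y0 [set w | c <= Dratio m1 m0 (Z w)].

From HB Require Import structures.
From mathcomp Require Import all_boot all_order all_algebra.
From mathcomp Require Import all_classical all_reals all_analysis.
From mathcomp Require Import measurable_realfun lra.
Import Order.TTheory GRing.Theory Num.Theory numFieldNormedType.Exports.
Local Open Scope classical_set_scope.
Local Open Scope ring_scope.

(* Write E_i(c) = E[Y_i ; D(Z) >= c].  As Y0 >= 0 and D(Z) > 0, the regression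
   m0(Z) is a.s. positive, so {D(Z) >= c} is a.s. the set where the excess
   m1(Z) - c m0(Z) is nonnegative; hence this event maximizes
   B |-> E[m1(Z) - c m0(Z) ; B], which is E[Y1 ; B] - c E[Y0 ; B] on Z-events.
   With B empty this gives E_1(c) >= c E_0(c), i.e. AD(c) >= c.  With c = c2
   and B = {D(Z) >= c1}, c1 <= c2, it gives
   E_1(c1) - c2 E_0(c1) <= E_1(c2) - c2 E_0(c2), which together with
   E_0(c2) <= E_0(c1) and AD(c2) >= c2 yields AD(c1) <= AD(c2). *)

Lemma ler_ratio_excess (R : realFieldType) (a1 a2 b1 b2 c : R) :
  0 < b2 -> b2 <= b1 -> c * b2 <= a2 -> a1 - c * b1 <= a2 - c * b2 ->
  a1 / b1 <= a2 / b2.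
Proof.
move=> b2_gt0 b21 ca2 excess; have b1_gt0 := lt_le_trans b2_gt0 b21.
rewrite ler_pdivrMr // mulrAC ler_pdivlMr //; nra.
Qed.

Lemma measurable_ratio_ge d (V : measurableType d) (R : realType)
    (f g : V -> R) (c : R) :
  measurable_fun setT f -> measurable_fun setT g ->
  measurable [set z | c <= f z / g z].
Proof.
move=> mf mg.
(* [f z / 0 = 0], so where [g] vanishes the condition reads [c <= 0]. *)
pose b z := [|| (g z == 0) && (c <= 0), (0 < g z) && (c * g z <= f z) |
   (g z < 0) && (f z <= c * g z)].
have -> : [set z | c <= f z / g z] = b @^-1` [set true].
  rewrite predeqE => z; rewrite /b /=.
  have [g_lt0|g_gt0|->] := ltgtP (g z) 0.
  - by rewrite ler_ndivlMr // (lt_eqF g_lt0) (lt_gtF g_lt0) g_lt0.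
  - by rewrite ler_pdivlMr //= orbF.
  - by rewrite invr0 mulr0 /= orbF.
have mcg : measurable_fun setT (fun z => c * g z) by exact: measurable_funM.
rewrite -[b @^-1` _]setTI; apply: (_ : measurable_fun setT b) => //.
apply: measurable_or; [|apply: measurable_or]; apply: measurable_and.
- exact: measurable_fun_eqr.
- exact: measurable_fun_ler.
- exact: measurable_fun_ltr.
- exact: measurable_fun_ler.
- exact: measurable_fun_ltr.
- exact: measurable_fun_ler.
Qed.

Section Rintegral_ae.
Context d {T : measurableType d} {R : realType}.
Variable mu : {measure set T -> \bar R}.
Implicit Types (B D S : set T) (f g : T -> R).

Lemma ae_le_Rintegral D f g : measurable D ->
  mu.-integrable D (EFin \o f) -> mu.-integrable D (EFin \o g) ->
  {ae mu, forall x, D x -> f x <= g x} ->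
  \int[mu]_(x in D) f x <= \int[mu]_(x in D) g x.
Proof.
move=> mD fi gi [N [mN N0 fgN]].
rewrite /Rintegral (negligible_integral mN mD fi N0).
rewrite (negligible_integral mN mD gi N0) -!/(Rintegral _ _ _).
have DN_sub : D `\` N `<=` D by move=> x [].
have mDN : measurable (D `\` N) by exact: measurableD.
apply: le_Rintegral => //.
- exact: integrableS fi.
- exact: integrableS gi.
by move=> x [Dx Nx]; apply: contrapT => fg; apply/Nx/fgN => /(_ Dx).
Qed.

Lemma ae_Rintegral_ge0 D f : measurable D -> mu.-integrable D (EFin \o f) ->
  {ae mu, forall x, D x -> 0 <= f x} -> 0 <= \int[mu]_(x in D) f x.
Proof.
move=> mD fi [N [mN N0 fN]].
rewrite /Rintegral (negligible_integral mN mD fi N0) -/(Rintegral _ _ _).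
apply: Rintegral_ge0 => x [Dx Nx].
by apply: contrapT => f_lt0; apply/Nx/fN => /(_ Dx).
Qed.

Lemma Rintegral_gt0 D f : measurable D -> mu.-integrable D (EFin \o f) ->
  {ae mu, forall x, D x -> 0 < f x} -> (0 < mu D)%E ->
  0 < \int[mu]_(x in D) f x.
Proof.
move=> mD fi f_gt0 muD_gt0.
rewrite lt_neqAle ae_Rintegral_ge0 ?andbT //; last first.
  by apply: filterS f_gt0 => x f_gt0x /f_gt0x /ltW.
apply/eqP => int0.
have abs_int0 : (\int[mu]_(x in D) `|(f x)%:E| = 0)%E.
  rewrite (ae_eq_integral (EFin \o f)) //.
  - by rewrite -(fineK (integrable_fin_num mD fi)) -/(Rintegral _ _ _) -int0.
  - exact: measurable_int (integrable_abse fi).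
  - exact: measurable_int fi.
  - apply: filterS f_gt0 => x f_gt0x /f_gt0x fx_gt0.
    by rewrite gee0_abs // lee_fin ltW.
have f0 := (ae_eq_integral_abs mu mD (measurable_int mu fi)).1 abs_int0.
have [N [mN N0 DN]] : {ae mu, forall x, ~ D x}.
  apply: filterS2 f0 f_gt0 => x f0x f_gt0x Dx.
  by have := f_gt0x Dx; have /= -> := congr1 fine (f0x Dx); rewrite ltxx.
have muD0 : mu D = 0%E by apply: (subset_measure0 mD mN) => // x Dx; apply: DN.
by rewrite muD0 ltxx in muD_gt0.
Qed.

Lemma le_Rintegral_sign_set B S g : measurable B -> measurable S ->
  mu.-integrable setT (EFin \o g) ->
  {ae mu, forall x, S x -> 0 <= g x} -> {ae mu, forall x, ~ S x -> g x <= 0} ->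
  \int[mu]_(x in B) g x <= \int[mu]_(x in S) g x.
Proof.
move=> mB mS gi g_ge0 g_le0.
rewrite (Rintegral_mkcond _ B) (Rintegral_mkcond _ S).
have gi_on (C : set T) : measurable C -> mu.-integrable setT (EFin \o (g \_ C)).
  move=> mC; rewrite -restrict_EFin; apply/(integrable_mkcond _ mC).
  exact: integrableS measurableT mC (@subsetT _ C) gi.
apply: ae_le_Rintegral => //; [exact: gi_on|exact: gi_on|].
apply: filterS2 g_ge0 g_le0 => x g_ge0x g_le0x _; rewrite !patchE.
have [/set_mem Sx|Sx] := boolP (x \in S); case: ifP => // _.
- exact: g_ge0x.
- by apply: g_le0x => /mem_set; apply/negP.
Qed.

Lemma ge0_subset_Rintegral B D f : measurable B -> measurable D -> B `<=` D ->
  mu.-integrable D (EFin \o f) -> (forall x, D x -> 0 <= f x) ->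
  \int[mu]_(x in B) f x <= \int[mu]_(x in D) f x.
Proof.
move=> mB mD BD fi f_ge0; apply: fine_le.
- exact: integrable_fin_num (integrableS mD mB BD fi).
- exact: integrable_fin_num fi.
apply: ge0_subset_integral => //; first exact: measurable_int fi.
Qed.

End Rintegral_ae.

Section regression_function.
Context {d d' : measure_display} {T : measurableType d} {V : measurableType d'}.
Context {R : realType}.
Context {P : probability T R} {Y : T -> R} {Z : T -> V} {m : V -> R}.
Hypothesis m_reg : is_cond_exp_given P Y Z m.

Lemma cond_exp_Rintegral {B} : measurable B ->
  \int[P]_(w in Z @^-1` B) Y w = \int[P]_(w in Z @^-1` B) m (Z w).
Proof. by case: m_reg => _ _ YmB mB; rewrite /Rintegral YmB. Qed.

Lemma cond_exp_integrable {D} : measurable D ->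
  P.-integrable D (EFin \o (m \o Z)).
Proof.
case: m_reg => _ mi _ mD.
exact: integrableS measurableT mD (@subsetT _ D) mi.
Qed.

Lemma cond_exp_ge0 : measurable_fun setT Z -> (forall w, 0 <= Y w) ->
  {ae P, forall w, 0 <= m (Z w)}.
Proof.
move=> mZ Y_ge0; case: (m_reg) => mm _ _.
pose B := [set z | m z < 0].
have mB : measurable B by rewrite -[B]setTI; exact: measurable_fun_ltr.
have mS : measurable (Z @^-1` B) by rewrite -[_ @^-1` _]setTI; exact: mZ.
exists (Z @^-1` B); split => // [|w]; last by move/negP; rewrite -ltNge.
apply/eqP; rewrite eq_le measure_ge0 andbT leNgt; apply/negP => PS_gt0.
have : 0 < \int[P]_(w in Z @^-1` B) - m (Z w).
  apply: Rintegral_gt0 => //; first exact: integrableN (cond_exp_integrable mS).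
  by apply: aeW => w Sw; rewrite oppr_gt0.
have -> : \int[P]_(w in Z @^-1` B) - m (Z w) =
          - \int[P]_(w in Z @^-1` B) m (Z w).
  rewrite -mulN1r -RintegralZl //; last exact: cond_exp_integrable.
  by apply: eq_Rintegral => w _; rewrite mulN1r.
by rewrite -cond_exp_Rintegral // oppr_gt0 ltNge Rintegral_ge0.
Qed.

End regression_function.

Section average_ratio.
Context d d' (T : measurableType d) (V : measurableType d') (R : realType).
Variables (P : probability T R) (Y1 Y0 : T -> R) (Z : T -> V) (m1 m0 : V -> R).
Hypotheses (mZ : measurable_fun setT Z) (Y0_ge0 : forall w, 0 <= Y0 w)
  (Y0_int : P.-integrable setT (EFin \o Y0))
  (m1_reg : is_cond_exp_given P Y1 Z m1) (m0_reg : is_cond_exp_given P Y0 Z m0)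
  (D_gt0 : {ae P, forall w, m0 (Z w) != 0 /\ 0 < Dratio m1 m0 (Z w)}).

Local Notation A c := [set w | c <= Dratio m1 m0 (Z w)].

Let measurable_Dratio_ge c : measurable [set z | c <= Dratio m1 m0 z].
Proof.
by case: m1_reg => mm1 _ _; case: m0_reg => mm0 _ _; exact: measurable_ratio_ge.
Qed.

Let measurable_A c : measurable (A c).
Proof. by rewrite -[A c]setTI; exact: mZ (measurable_Dratio_ge c). Qed.

Let m0Z_gt0 : {ae P, forall w, 0 < m0 (Z w)}.
Proof.
apply: filterS2 (cond_exp_ge0 m0_reg mZ Y0_ge0) D_gt0 => w m0_ge0 [m0_neq0 _].
by rewrite lt_neqAle eq_sym m0_neq0.
Qed.

Let Rintegral_Y0_gt0 c : (0 < P (A c))%E -> 0 < \int[P]_(w in A c) Y0 w.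
Proof.
move=> PA_gt0; rewrite (cond_exp_Rintegral m0_reg (measurable_Dratio_ge c)).
apply: Rintegral_gt0 => //.
- exact: measurable_A.
- by apply: (cond_exp_integrable m0_reg); exact: measurable_A.
- by apply: filterS m0Z_gt0 => w m0_gt0 _.
Qed.

Let scaled_m0Z_integrable c D : measurable D ->
  P.-integrable D (EFin \o (fun w => c * m0 (Z w))).
Proof.
move=> mD; have := integrableZl mD c (cond_exp_integrable m0_reg mD).
by apply: eq_integrable => // w _; rewrite /= EFinM.
Qed.

Let Rintegral_excess c' c :
  \int[P]_(w in A c') (m1 (Z w) - c * m0 (Z w)) =
  \int[P]_(w in A c') Y1 w - c * \int[P]_(w in A c') Y0 w.
Proof.
have mA := measurable_A c'; have mDc := measurable_Dratio_ge c'.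
have Y1E : \int[P]_(w in A c') Y1 w = \int[P]_(w in A c') m1 (Z w).
  exact (cond_exp_Rintegral m1_reg mDc).
have Y0E : \int[P]_(w in A c') Y0 w = \int[P]_(w in A c') m0 (Z w).
  exact (cond_exp_Rintegral m0_reg mDc).
rewrite Y1E Y0E RintegralB //; last exact: scaled_m0Z_integrable.
- by rewrite RintegralZl //; exact (cond_exp_integrable m0_reg mA).
- exact (cond_exp_integrable m1_reg mA).
Qed.

Let excess_le c B : measurable B ->
  \int[P]_(w in B) (m1 (Z w) - c * m0 (Z w)) <=
  \int[P]_(w in A c) (m1 (Z w) - c * m0 (Z w)).
Proof.
move=> mB; apply: le_Rintegral_sign_set => //.
- have m1Z_int := cond_exp_integrable m1_reg measurableT.
  have cm0Z_int := scaled_m0Z_integrable c _ measurableT.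
  by apply: eq_integrable (integrableB measurableT m1Z_int cm0Z_int).
- apply: filterS m0Z_gt0 => w m0_gt0 /=.
  by rewrite /Dratio ler_pdivlMr // subr_ge0.
- apply: filterS m0Z_gt0 => w m0_gt0 /= /negP.
  by rewrite -ltNge /Dratio ltr_pdivrMr // subr_le0 => /ltW.
Qed.

Let Rintegral_Y1_ge c : c * \int[P]_(w in A c) Y0 w <= \int[P]_(w in A c) Y1 w.
Proof.
have := excess_le c _ measurable0.
by rewrite Rintegral_set0 Rintegral_excess subr_ge0.
Qed.

Let ADratioE c : (0 < P (A c))%E ->
  ADratio P Y1 Y0 Z m1 m0 c = \int[P]_(w in A c) Y1 w / \int[P]_(w in A c) Y0 w.
Proof.
move=> PA_gt0; have PA_neq0 : fine (P (A c)) != 0.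
  have PA_lty := le_lt_trans (probability_le1 P (measurable_A c)) (ltry 1).
  by rewrite gt_eqF // fine_gt0 // PA_gt0 PA_lty.
by rewrite /ADratio /condE_event invf_div mulrA mulfVK.
Qed.

Lemma ADratio_ge c : (0 < P (A c))%E -> c <= ADratio P Y1 Y0 Z m1 m0 c.
Proof.
move=> PA_gt0.
by rewrite ADratioE // ler_pdivlMr ?Rintegral_Y0_gt0 ?Rintegral_Y1_ge.
Qed.

Lemma ADratio_nondecreasing c1 c2 : c1 <= c2 -> (0 < P (A c2))%E ->
  ADratio P Y1 Y0 Z m1 m0 c1 <= ADratio P Y1 Y0 Z m1 m0 c2.
Proof.
move=> c12 PA2_gt0.
have A21 : A c2 `<=` A c1 by move=> w /= /(le_trans c12).
have PA1_gt0 : (0 < P (A c1))%E.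
  by apply: lt_le_trans PA2_gt0 (le_measure _ _ _ A21); rewrite inE.
rewrite !ADratioE //; apply: ler_ratio_excess.
all: rewrite ?Rintegral_Y0_gt0 ?Rintegral_Y1_ge //.
- apply: ge0_subset_Rintegral A21 _ _ => //.
  exact: integrableS measurableT _ (@subsetT _ _) Y0_int.
- by rewrite -!Rintegral_excess excess_le.
Qed.

End average_ratio.

Theorem theorem2 (d d' : measure_display) (T : measurableType d)
  (V : measurableType d') (R : realType) (P : probability T R)
  (Y1 Y0 : T -> R) (Z : T -> V) (m1 m0 : V -> R) :
  measurable_fun setT Y1 -> measurable_fun setT Y0 -> measurable_fun setT Z ->
  (forall w, 0 <= Y1 w) -> (forall w, 0 <= Y0 w) ->
  P.-integrable setT (EFin \o Y1) -> P.-integrable setT (EFin \o Y0) ->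
  is_cond_exp_given P Y1 Z m1 -> is_cond_exp_given P Y0 Z m0 ->
  {ae P, forall w, m0 (Z w) != 0 /\ 0 < Dratio m1 m0 (Z w)} ->
  (forall c1 c2 : R, c1 <= c2 ->
     (0 < P [set w | (c2 <= Dratio m1 m0 (Z w))%R])%E ->
     ADratio P Y1 Y0 Z m1 m0 c1 <= ADratio P Y1 Y0 Z m1 m0 c2)
  /\
  (forall c : R, (0 < P [set w | (c <= Dratio m1 m0 (Z w))%R])%E ->
     c <= ADratio P Y1 Y0 Z m1 m0 c).
Proof.
(* Y1 enters only through its regression m1, whose integrability suffices. *)
move=> _ _ mZ _ Y0_ge0 _ Y0_int m1_reg m0_reg D_gt0; split.
- exact: ADratio_nondecreasing.
- exact: ADratio_ge.
Qed.
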